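(* Let $(S,+,\cdot)$ be a left inverse semi-brace and let $r_S$ be the map associated to $S$. Suppose that for all $a,b,c\in S$: (1) $(a+b)(a+b)^{-1}(a+bc)=a+bc$; (2) $\lambda_a(b)^{-1}+\lambda_{\rho_b(a)}(c)=\lambda_a(b)^{-1}+\lambda_{(a^{-1}+b)^{-1}}\lambda_b(c)$; (3) $\rho_b(a)^{-1}+c=(b^{-1}+c)\left(\rho_{\lambda_b(c)}(a)^{-1}+\rho_c(b)\right)$. Then $r_S$ is a solution of the Yang–Baxter equation.
   Context: An inverse semigroup is a semigroup $(S,\cdot)$ in which for each $a$ there is a unique $a^{-1}$ with $aa^{-1}a=a$ and $a^{-1}aa^{-1}=a^{-1}$. A left inverse semi-brace is a triple $(S,+,\cdot)$ where $(S,+)$ is a semigroup (not necessarily commutative), $(S,\cdot)$ is an inverse semigroup, and $a(b+c)=ab+a(a^{-1}+c)$ for all $a,b,c\in S$. For such $S$ set $\lambda_a(b)=a(a^{-1}+b)$ and $\rho_b(a)=(a^{-1}+b)^{-1}b$, and the map associated to $S$ is $r_S:S\times S\to S\times S$, $r_S(a,b)=(\lambda_a(b),\rho_b(a))$. A map $r:S\times S\to S\times S$ is a solution of the Yang–Baxter equation if $(r\times \mathrm{id}_S)(\mathrm{id}_S\times r)(r\times\mathrm{id}_S)=(\mathrm{id}_S\times r)(r\times\mathrm{id}_S)(\mathrm{id}_S\times r)$. *)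

Definition associative {S : Type} (op : S -> S -> S) : Prop :=
  forall a b c, op a (op b c) = op (op a b) c.

(* We carry the inverse as a
   function inv together with the existence and uniqueness axioms. *)
Definition is_inverse_semigroup {S : Type} (mul : S -> S -> S) (inv : S -> S) : Prop :=
  associative mul /\
  (forall a, mul (mul a (inv a)) a = a /\ mul (mul (inv a) a) (inv a) = inv a) /\
  (forall a b, mul (mul a b) a = a -> mul (mul b a) b = b -> b = inv a).

Definition is_left_inverse_semi_brace {S : Type}
  (add mul : S -> S -> S) (inv : S -> S) : Prop :=
  associative add /\ is_inverse_semigroup mul inv /\
  (forall a b c, mul a (add b c) = add (mul a b) (mul a (add (inv a) c))).

Definition lam {S : Type} (add mul : S -> S -> S) (inv : S -> S) (a b : S) : S :=
  mul a (add (inv a) b).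

Definition rho {S : Type} (add mul : S -> S -> S) (inv : S -> S) (b a : S) : S :=
  mul (inv (add (inv a) b)) b.

Definition r_S {S : Type} (add mul : S -> S -> S) (inv : S -> S) (p : S * S) : S * S :=
  (lam add mul inv (fst p) (snd p), rho add mul inv (snd p) (fst p)).

Definition r12 {S : Type} (r : S * S -> S * S) (t : S * S * S) : S * S * S :=
  let '(x, y, z) := t in let '(u, v) := r (x, y) in (u, v, z).
Definition r23 {S : Type} (r : S * S -> S * S) (t : S * S * S) : S * S * S :=
  let '(x, y, z) := t in let '(u, v) := r (y, z) in (x, u, v).

Definition is_YBE_solution {S : Type} (r : S * S -> S * S) : Prop :=
  forall t : S * S * S, r12 r (r23 r (r12 r t)) = r23 r (r12 r (r23 r t)).


(* In an inverse semigroup idempotents commute, so inversion reverses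
   products.  Coordinatewise, the braid relation for r_S amounts to
     λ_{λ_a b} λ_{ρ_b a} c = λ_a λ_b c,
     ρ_{λ_{ρ_b a} c} (λ_a b) = λ_{ρ_{λ_b c} a} (ρ_c b),
     ρ_c ρ_b a = ρ_{ρ_c b} ρ_{λ_b c} a.
   With g = a⁻¹ + b and j = a⁻¹ + λ_b c, condition (2) and the semi-brace
   axiom give λ_a(b)⁻¹ + λ_{ρ_b a} c = g⁻¹ j, while (1) says g g⁻¹ j = j;
   this yields the first identity, and with (3) the second.  The third is
   (3) inverted and multiplied by c on the right. *)

Section InverseSemigroup.
Context {S : Type} {mul : S -> S -> S} {inv : S -> S}.
Hypothesis HS : is_inverse_semigroup mul inv.
Local Infix "*" := mul.

Lemma mulA a b c : a * (b * c) = a * b * c.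
Proof. exact (proj1 HS a b c). Qed.

Lemma mul_inv_mul a : a * inv a * a = a.
Proof. exact (proj1 (proj1 (proj2 HS) a)). Qed.

Lemma inv_mul_inv a : inv a * a * inv a = inv a.
Proof. exact (proj2 (proj1 (proj2 HS) a)). Qed.

Lemma inv_unique a b : a * b * a = a -> b * a * b = b -> b = inv a.
Proof. exact (proj2 (proj2 HS) a b). Qed.

Lemma inv_inv a : inv (inv a) = a.
Proof. symmetry; apply inv_unique; [apply inv_mul_inv | apply mul_inv_mul]. Qed.

Lemma inv_idem e : e * e = e -> inv e = e.
Proof. intros He; symmetry; apply inv_unique; rewrite !He; reflexivity. Qed.

Lemma idem_mulr e a : e * e = e -> e * (e * a) = e * a.
Proof. intros He; rewrite mulA, He; reflexivity. Qed.

Lemma mul_idem e f : e * e = e -> f * f = f -> e * f * (e * f) = e * f.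
Proof.
  intros He Hf.
  set (x := inv (e * f)).
  assert (Hx1 : e * f * x * (e * f) = e * f) by apply mul_inv_mul.
  assert (Hx2 : x * (e * f) * x = x) by apply inv_mul_inv.
  repeat rewrite <- mulA in Hx1, Hx2.
  assert (Hx2r : forall r, x * (e * (f * (x * r))) = x * r).
  { intros r; rewrite (mulA f x r), (mulA e), (mulA x), Hx2.
    reflexivity. }
  (* [f x e] is another inverse of [e f]. *)
  assert (Hfxe : f * x * e = x).
  { apply inv_unique; repeat rewrite <- mulA;
      rewrite ?(idem_mulr e), ?(idem_mulr f), ?Hx2r by assumption; trivial. }
  assert (Hxx : x * x = x).
  { rewrite <- Hfxe; repeat rewrite <- mulA; rewrite Hx2r; reflexivity. }
  assert (Hef : e * f = x).
  { rewrite <- (inv_idem x Hxx); symmetry; apply inv_inv. }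
  rewrite Hef; exact Hxx.
Qed.

Lemma idem_comm e f : e * e = e -> f * f = f -> e * f = f * e.
Proof.
  intros He Hf.
  pose proof (mul_idem e f He Hf) as Hef.
  pose proof (mul_idem f e Hf He) as Hfe.
  repeat rewrite <- mulA in Hef, Hfe.
  assert (Hinv : f * e = inv (e * f)).
  { apply inv_unique; repeat rewrite <- mulA;
      rewrite ?(idem_mulr e), ?(idem_mulr f) by assumption; assumption. }
  rewrite Hinv; symmetry; apply inv_idem, mul_idem; assumption.
Qed.

Lemma mul_inv_idem a : a * inv a * (a * inv a) = a * inv a.
Proof. rewrite mulA, mul_inv_mul; reflexivity. Qed.

Lemma inv_mul_idem a : inv a * a * (inv a * a) = inv a * a.
Proof. rewrite mulA, inv_mul_inv; reflexivity. Qed.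

Lemma inv_mul a b : inv (a * b) = inv b * inv a.
Proof.
  symmetry; apply inv_unique.
  - transitivity (a * (b * inv b * (inv a * a)) * b).
    + repeat rewrite <- mulA; reflexivity.
    + rewrite (idem_comm _ _ (mul_inv_idem b) (inv_mul_idem a)).
      repeat rewrite <- mulA.
      rewrite (mulA b (inv b) b), mul_inv_mul.
      rewrite (mulA a (inv a)), (mulA (a * inv a)), mul_inv_mul.
      reflexivity.
  - transitivity (inv b * (inv a * a * (b * inv b)) * inv a).
    + repeat rewrite <- mulA; reflexivity.
    + rewrite <- (idem_comm _ _ (mul_inv_idem b) (inv_mul_idem a)).
      repeat rewrite <- mulA.
      rewrite (mulA (inv a) a (inv a)), inv_mul_inv.
      rewrite (mulA (inv b) b), (mulA (inv b * b)), inv_mul_inv.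
      reflexivity.
Qed.

Lemma idem_absorb_inv e a : e * e = e -> e * a = a -> inv a * e = inv a.
Proof.
  intros He Hea.
  transitivity (inv (e * a)).
  - rewrite inv_mul, (inv_idem e He); reflexivity.
  - rewrite Hea; reflexivity.
Qed.

End InverseSemigroup.

Section LeftInverseSemiBrace.
Context {S : Type} {add mul : S -> S -> S} {inv : S -> S}.
Hypothesis HB : is_left_inverse_semi_brace add mul inv.
Let HS : is_inverse_semigroup mul inv := proj1 (proj2 HB).
Local Infix "+" := add.
Local Infix "*" := mul.
Local Notation λ := (lam add mul inv).
Local Notation ρ := (rho add mul inv).

Lemma mul_add a b c : a * (b + c) = a * b + a * (inv a + c).
Proof. exact (proj2 (proj2 HB) a b c). Qed.

Lemma inv_lam_add_lam a b c :
  inv (λ a b) + λ (inv (inv a + b)) c = inv (inv a + b) * (inv a + c).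
Proof.
  unfold lam. rewrite (mul_add (inv (inv a + b)) (inv a)), (inv_mul HS).
  reflexivity.
Qed.

Hypothesis H1 : forall a b c, (a + b) * inv (a + b) * (a + b * c) = a + b * c.
Hypothesis H2 : forall a b c,
  inv (λ a b) + λ (ρ b a) c = inv (λ a b) + λ (inv (inv a + b)) (λ b c).
Hypothesis H3 : forall a b c,
  inv (ρ b a) + c = (inv b + c) * (inv (ρ (λ b c) a) + ρ c b).

Lemma inv_lam_add_lam_rho a b c :
  inv (λ a b) + λ (ρ b a) c = inv (inv a + b) * (inv a + λ b c).
Proof. rewrite H2; apply inv_lam_add_lam. Qed.

Lemma lam_lam a b c : λ (λ a b) (λ (ρ b a) c) = λ a (λ b c).
Proof.
  unfold lam at 1. rewrite inv_lam_add_lam_rho. unfold lam.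
  rewrite <- (mulA HS a), (mulA HS (inv a + b)), H1. reflexivity.
Qed.

Lemma rho_rho a b c : ρ c (ρ b a) = ρ (ρ c b) (ρ (λ b c) a).
Proof.
  unfold rho at 1. rewrite H3, (inv_mul HS), <- (mulA HS). reflexivity.
Qed.

Lemma rho_lam a b c : ρ (λ (ρ b a) c) (λ a b) = λ (ρ (λ b c) a) (ρ c b).
Proof.
  set (g := inv a + b). set (j := inv a + λ b c).
  (* By (1), the idempotent [g g⁻¹] fixes [j]. *)
  assert (Hj : inv j * (g * inv g) = inv j).
  { apply (idem_absorb_inv HS); [apply (mul_inv_idem HS) | apply H1]. }
  unfold rho at 1. rewrite inv_lam_add_lam_rho. fold g j.
  transitivity (inv j * (b * (inv (ρ b a) + c))).
  - rewrite (inv_mul HS), (inv_inv HS).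
    change (λ (ρ b a) c) with (inv g * b * (inv (ρ b a) + c)).
    repeat rewrite (mulA HS).
    rewrite <- (mulA HS (inv j) g), Hj. reflexivity.
  - change (λ (ρ (λ b c) a) (ρ c b))
      with (inv j * (b * (inv b + c)) * (inv (ρ (λ b c) a) + ρ c b)).
    rewrite H3. repeat rewrite <- (mulA HS). reflexivity.
Qed.

End LeftInverseSemiBrace.

Lemma is_YBE_solution_of_identities {S : Type} (l r : S -> S -> S) :
  (forall a b c, l (l a b) (l (r b a) c) = l a (l b c)) ->
  (forall a b c, r (l (r b a) c) (l a b) = l (r (l b c) a) (r c b)) ->
  (forall a b c, r c (r b a) = r (r c b) (r (l b c) a)) ->
  is_YBE_solution (fun p => (l (fst p) (snd p), r (snd p) (fst p))).
Proof.
  intros Hll Hrl Hrr [[a b] c]; simpl.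
  rewrite Hll, Hrl, Hrr. reflexivity.
Qed.

Theorem theorem12 (S : Type) (add mul : S -> S -> S) (inv : S -> S)
  (HS : is_left_inverse_semi_brace add mul inv)
  (H1 : forall a b c : S,
      mul (mul (add a b) (inv (add a b))) (add a (mul b c)) = add a (mul b c))
  (H2 : forall a b c : S,
      add (inv (lam add mul inv a b)) (lam add mul inv (rho add mul inv b a) c)
      = add (inv (lam add mul inv a b))
            (lam add mul inv (inv (add (inv a) b)) (lam add mul inv b c)))
  (H3 : forall a b c : S,
      add (inv (rho add mul inv b a)) c
      = mul (add (inv b) c)
            (add (inv (rho add mul inv (lam add mul inv b c) a)) (rho add mul inv c b))) :
  is_YBE_solution (r_S add mul inv).
Proof.
  apply is_YBE_solution_of_identities.
  - exact (lam_lam HS H1 H2).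
  - exact (rho_lam HS H1 H2 H3).
  - exact (rho_rho HS H3).
Qed.
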